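(* Let $G$ be a group, $A$ a set of generators of $G$, and $E_G$ the category of $G$-sets. There exists a closed model structure on $E_G$, in which every morphism is a fibration, such that a morphism of $G$-sets $f:X\to Y$ is a weak equivalence if and only if the induced morphism of directed Cayley graphs $C(X,A,G)\to C(Y,A,G)$ is a weak equivalence of the closed model on $\mathrm{Gph}$ defined by counting $(c_p)_{p\ge1}$, i.e. if and only if for every $p\ge1$ composition with it is a bijection $\mathrm{Hom}_{\mathrm{Gph}}(c_p,C(X,A,G))\to\mathrm{Hom}_{\mathrm{Gph}}(c_p,C(Y,A,G))$.
   Context: A directed graph consists of nodes, arcs, and source/target maps; $\mathrm{Gph}$ is the category of directed graphs. For $p\ge1$, $c_p$ is the directed graph with nodes $\mathbb{Z}/p\mathbb{Z}$ and one arc from $[n]$ to $[n+1]$ for each $[n]$. For a $G$-set $X$, the directed Cayley graph $C(X,A,G)$ has node set $X$, arc set $X\times A$, source $(x,a)\mapsto x$ and target $(x,a)\mapsto a\cdot x$; a $G$-map $\phi$ induces $(\phi,\phi\times\mathrm{id}_A)$. A closed model structure is a triple $(\mathrm{Fib},\mathrm{Cof},W)$, $W$ satisfying 2-out-of-3, with $(\mathrm{Fib}\cap W,\mathrm{Cof})$ and $(\mathrm{Fib},\mathrm{Cof}\cap W)$ weak factorization systems. *)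

From mathcomp Require Import all_boot.
Set Implicit Arguments. Unset Strict Implicit. Unset Printing Implicit Defensive.

Record group := Group {
  gcar :> Type;
  gmul : gcar -> gcar -> gcar;
  gone : gcar;
  ginv : gcar -> gcar;
  gmulA : forall x y z, gmul x (gmul y z) = gmul (gmul x y) z;
  gmul1 : forall x, gmul gone x = x;
  gmulV : forall x, gmul (ginv x) x = gone
}.

Definition is_subgroup (G : group) (H : G -> Prop) : Prop :=
  H (gone G) /\ (forall x y, H x -> H y -> H (gmul x y)) /\ (forall x, H x -> H (ginv x)).

Definition generates (G : group) (A : G -> Prop) : Prop :=
  forall H : G -> Prop, is_subgroup H -> (forall a, A a -> H a) -> forall g, H g.

Record gset (G : group) := GSet {
  gs_car :> Type;
  act : G -> gs_car -> gs_car;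
  act1 : forall x, act (gone G) x = x;
  actM : forall g h x, act (gmul g h) x = act g (act h x)
}.

Record gmap (G : group) (X Y : gset G) := GMap {
  gfun :> X -> Y;
  gequiv : forall g x, gfun (act g x) = act g (gfun x)
}.

Definition gcomp (G : group) (X Y Z : gset G) (g : gmap Y Z) (f : gmap X Y) : gmap X Z.
Proof.
  refine (@GMap G X Z (fun x => g (f x)) _).
  by move=> h x; rewrite !gequiv.
Defined.

Definition mclass (G : group) := forall X Y : gset G, gmap X Y -> Prop.

Definition cap_class (G : group) (P Q : mclass G) : mclass G :=
  fun X Y f => P X Y f /\ Q X Y f.

Definition llp (G : group) (A B X Y : gset G) (i : gmap A B) (p : gmap X Y) : Prop :=
  forall (u : gmap A X) (v : gmap B Y),
    (forall a, p (u a) = v (i a)) ->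
    exists h : gmap B X, (forall a, h (i a) = u a) /\ (forall b, p (h b) = v b).

Definition wfs (G : group) (L R : mclass G) : Prop :=
  (forall (X Y : gset G) (f : gmap X Y),
     exists (Z : gset G) (i : gmap X Z) (p : gmap Z Y),
       L X Z i /\ R Z Y p /\ (forall x, p (i x) = f x)) /\
  (forall (A B : gset G) (i : gmap A B),
     L A B i <-> (forall (X Y : gset G) (p : gmap X Y), R X Y p -> llp i p)) /\
  (forall (X Y : gset G) (p : gmap X Y),
     R X Y p <-> (forall (A B : gset G) (i : gmap A B), L A B i -> llp i p)).

Definition two_out_of_three (G : group) (W : mclass G) : Prop :=
  forall (X Y Z : gset G) (f : gmap X Y) (g : gmap Y Z),
    (W X Y f -> W Y Z g -> W X Z (gcomp g f)) /\
    (W X Y f -> W X Z (gcomp g f) -> W Y Z g) /\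
    (W Y Z g -> W X Z (gcomp g f) -> W X Y f).

Definition closed_model_structure (G : group) (Fib Cof W : mclass G) : Prop :=
  two_out_of_three W /\ wfs Cof (cap_class Fib W) /\ wfs (cap_class Cof W) Fib.

Record graph := Graph {
  gnode : Type;
  garc : Type;
  gsrc : garc -> gnode;
  gtgt : garc -> gnode
}.

Record ghom (Γ Δ : graph) := GHom {
  hnode : gnode Γ -> gnode Δ;
  harc : garc Γ -> garc Δ;
  hsrc : forall e, @gsrc Δ (harc e) = hnode (@gsrc Γ e);
  htgt : forall e, @gtgt Δ (harc e) = hnode (@gtgt Γ e)
}.

Definition ghcomp (Γ Δ Θ : graph) (g : ghom Δ Θ) (f : ghom Γ Δ) : ghom Γ Θ.
Proof.
  refine (@GHom Γ Θ (fun x => hnode g (hnode f x)) (fun e => harc g (harc f e)) _ _).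
  - by move=> e; rewrite hsrc hsrc.
  - by move=> e; rewrite htgt htgt.
Defined.

(* c_p : nodes Z/pZ (as 'I_p), one arc [n] -> [n+1] for each [n] (p >= 1) *)
Definition cycle_graph (p : nat) : graph :=
  @Graph 'I_p 'I_p (fun n => n) (fun n => ordS n).

Definition cayley (G : group) (A : G -> Prop) (X : gset G) : graph :=
  @Graph X (X * {a : G | A a})%type (fun xa => xa.1) (fun xa => act (sval xa.2) xa.1).

Definition cayley_map (G : group) (A : G -> Prop) (X Y : gset G) (f : gmap X Y) :
  ghom (cayley A X) (cayley A Y).
Proof.
  refine (@GHom (cayley A X) (cayley A Y) (fun x => f x)
            (fun xa => (f xa.1, xa.2)) _ _).
  - by [].
  - by move=> [x a] /=; rewrite gequiv.
Defined.

Definition gph_counting_we (Γ Δ : graph) (φ : ghom Γ Δ) : Prop :=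
  forall p : nat, 0 < p ->
    bijective (fun h : ghom (cycle_graph p) Γ => ghcomp φ h).

From mathcomp Require Import all_boot.
From Stdlib Require Import ProofIrrelevance FunctionalExtensionality PropExtensionality ClassicalEpsilon.
Set Implicit Arguments. Unset Strict Implicit. Unset Printing Implicit Defensive.

(* Every map is a fibration; the weak equivalences W are the G-maps f : X -> Y
   that restrict, for every nonempty word w in the generators, to a bijection
   between the points of X and of Y fixed by the value of w ("fix-bijections").

   1. For an arbitrary family val : D -> G of test elements, fix-bijections
      satisfy 2-out-of-3, contain the isomorphisms and are closed under
      retracts.
   2. Abstractly, such a class W yields the closed model structure
      (all maps, LLP(W), W) as soon as every map factors as an LLP(W)-map
      followed by a W-map; its trivial cofibrations are the isomorphisms.
   3. The factorization is built in one step: freely attach orbit cells to X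
      and take the quotient by the least G-congruence forcing the required
      fixed points to exist and to be unique (a small-object argument that
      stops after one stage).
   4. Graph morphisms c_{n+1} -> C(X, A, G) are exactly words of length n+1
      in A together with a point of X fixed by their value, so counting
      closed walks detects precisely the fix-bijections for word values.
   The theorem combines 1-4. *)

Section GSets.
Variable G : group.

(* The right-sided group laws, derived from the left-sided axioms; the right
   unit law is what lets a free orbit be generated by its points (1, q). *)
Lemma gmulVr (x : G) : gmul x (ginv x) = gone G.
Proof.
by rewrite -[LHS]gmul1 -[in LHS](gmulV (ginv x)) -gmulA (gmulA (ginv x)) gmulV gmul1 gmulV.
Qed.

Lemma gmul1r (x : G) : gmul x (gone G) = x.
Proof. by rewrite -(gmulV x) gmulA gmulVr gmul1. Qed.

Definition fixed (X : gset G) (g : G) (x : X) : Prop := act g x = x.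

Lemma fixed_gmap (X Y : gset G) (f : gmap X Y) (g : G) (x : X) :
  fixed g x -> fixed g (f x).
Proof. by rewrite /fixed -gequiv => ->. Qed.

Definition gid (X : gset G) : gmap X X := @GMap G X X id (fun _ _ => erefl).

Definition sum_gset (X Y : gset G) : gset G.
Proof.
refine (@GSet G (X + Y)%type
  (fun g s => match s with inl x => inl (act g x) | inr y => inr (act g y) end) _ _).
- by case=> x; rewrite act1.
- by move=> g h [x|y]; rewrite actM.
Defined.

Definition ginl (X Y : gset G) : gmap X (sum_gset X Y) :=
  @GMap G X (sum_gset X Y) inl (fun _ _ => erefl).

Definition gcase (X Y E : gset G) (u : gmap X E) (v : gmap Y E) : gmap (sum_gset X Y) E.
Proof.
refine (@GMap G (sum_gset X Y) E
  (fun s => match s with inl x => u x | inr y => v y end) _).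
by move=> g [x|y]; rewrite /= gequiv.
Defined.

Definition free_gset (Q : Type) : gset G.
Proof.
refine (@GSet G (G * Q)%type (fun g sq => (gmul g sq.1, sq.2)) _ _).
- by case=> s q /=; rewrite gmul1.
- by move=> g h [s q] /=; rewrite gmulA.
Defined.

Definition free_ext (Q : Type) (E : gset G) (e : Q -> E) : gmap (free_gset Q) E.
Proof.
refine (@GMap G (free_gset Q) E (fun sq => act sq.1 (e sq.2)) _).
by move=> g [s q]; rewrite /= actM.
Defined.

Lemma gmap_sum_free_ext (X E : gset G) (Q : Type) (h1 h2 : gmap (sum_gset X (free_gset Q)) E) :
  (forall x, h1 (inl x) = h2 (inl x)) ->
  (forall q, h1 (inr (gone G, q)) = h2 (inr (gone G, q))) ->
  forall a, h1 a = h2 a.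
Proof.
move=> hl hr [x|[s q]]; first exact: hl.
have -> : inr (s, q) = act s (inr (gone G, q) : sum_gset X (free_gset Q)).
  by rewrite /= gmul1r.
by rewrite !gequiv hr.
Qed.

Lemma iso_llp (X Y : gset G) (i : gmap X Y) (r : gmap Y X) :
  (forall x, r (i x) = x) -> (forall y, i (r y) = y) ->
  forall (E B : gset G) (p : gmap E B), llp i p.
Proof.
move=> ri ir E B p u v sq; exists (gcomp u r); split => /=.
- by move=> x; rewrite ri.
- by move=> y; rewrite sq ir.
Qed.

End GSets.
Arguments free_gset : clear implicits.

Definition llp_class (G : group) (W : mclass G) (A B : gset G) (i : gmap A B) : Prop :=
  forall (E F : gset G) (p : gmap E F), W E F p -> llp i p.

Definition all_maps (G : group) : mclass G := fun _ _ _ => True.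
Arguments all_maps : clear implicits.

Section FixedPointBijections.
Variables (G : group) (D : Type) (val : D -> G).

Definition fix_bij : mclass G := fun X Y f =>
  (forall w (y : Y), fixed (val w) y -> exists x, f x = y /\ fixed (val w) x) /\
  (forall w (x1 x2 : X), f x1 = f x2 -> fixed (val w) x1 -> fixed (val w) x2 -> x1 = x2).

(* Fixed points are preserved by G-maps, so bijectivity on them composes and
   cancels like ordinary bijectivity. *)
Lemma fix_bij_2of3 : two_out_of_three fix_bij.
Proof.
move=> X Y Z f g; split; [|split].
- move=> [f_surj f_inj] [g_surj g_inj]; split.
  + move=> w z hz; have [y [<- hy]] := g_surj w z hz.
    by have [x [<- hx]] := f_surj w y hy; exists x.
  + move=> w x1 x2 e h1 h2; apply: (f_inj w) => //.
    exact: (g_inj w _ _ e (fixed_gmap f h1) (fixed_gmap f h2)).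
- move=> [f_surj f_inj] [gf_surj gf_inj]; split.
  + move=> w z hz; have [x [<- hx]] := gf_surj w z hz.
    by exists (f x); split=> //; apply: fixed_gmap.
  + move=> w y1 y2 e h1 h2.
    have [x1 [fx1 k1]] := f_surj w y1 h1; have [x2 [fx2 k2]] := f_surj w y2 h2.
    by subst y1 y2; congr (f _); apply: (gf_inj w).
- move=> [g_surj g_inj] [gf_surj gf_inj]; split.
  + move=> w y hy; have [x [gx hx]] := gf_surj w (g y) (fixed_gmap g hy).
    by exists x; split=> //; apply: (g_inj w) => //; apply: fixed_gmap.
  + by move=> w x1 x2 e; apply: (gf_inj w) => /=; rewrite e.
Qed.

Lemma fix_bij_iso (X Y : gset G) (i : gmap X Y) (r : gmap Y X) :
  (forall x, r (i x) = x) -> (forall y, i (r y) = y) -> fix_bij i.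
Proof.
move=> ri ir; split.
- by move=> w y hy; exists (r y); split; [|apply: fixed_gmap].
- by move=> w x1 x2 e _ _; rewrite -(ri x1) e ri.
Qed.

Lemma fix_bij_retract (X Y Z : gset G) (p : gmap X Y) (i : gmap X Z) (r : gmap Z X)
    (q : gmap Z Y) :
  (forall x, r (i x) = x) -> (forall z, p (r z) = q z) -> fix_bij q -> fix_bij p.
Proof.
move=> ri pr [q_surj q_inj]; split.
- move=> w y hy; have [z [<- hz]] := q_surj w y hy.
  by exists (r z); split; [|apply: fixed_gmap].
- move=> w x1 x2 e h1 h2; rewrite -(ri x1) -(ri x2); congr (r _).
  apply: (q_inj w); [by rewrite -!pr !ri | exact: fixed_gmap | exact: fixed_gmap].
Qed.

End FixedPointBijections.

Section ModelStructureAllFibrations.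
Variables (G : group) (W : mclass G).
Hypothesis W_2of3 : two_out_of_three W.
Hypothesis W_iso : forall (X Y : gset G) (i : gmap X Y) (r : gmap Y X),
  (forall x, r (i x) = x) -> (forall y, i (r y) = y) -> W i.
Hypothesis W_retract : forall (X Y Z : gset G) (p : gmap X Y) (i : gmap X Z)
    (r : gmap Z X) (q : gmap Z Y),
  (forall x, r (i x) = x) -> (forall z, p (r z) = q z) -> W q -> W p.
Hypothesis W_factor : forall (X Y : gset G) (f : gmap X Y),
  exists (Z : gset G) (i : gmap X Z) (p : gmap Z Y),
    llp_class W i /\ W p /\ (forall x, p (i x) = f x).

(* A map in W with the LLP against W lifts against itself, hence is invertible. *)
Lemma trivial_cofibration_iso (X Y : gset G) (i : gmap X Y) :
  llp_class W i -> W i ->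
  exists r : gmap Y X, (forall x, r (i x) = x) /\ (forall y, i (r y) = y).
Proof.
move=> Ci Wi; have [r [ri ir]] := Ci _ _ i Wi (gid X) (gid Y) (fun _ => erefl).
by exists r.
Qed.

Lemma wfs_cof_trivfib : wfs (llp_class W) (cap_class (all_maps G) W).
Proof.
split; [|split].
- move=> X Y f; have [Z [i [p [Ci [Wp pi]]]]] := W_factor f.
  by exists Z, i, p.
- by move=> X Y i; split=> [Ci E B p [_ Wp]|H E B p Wp]; [exact: Ci | exact: H].
- move=> X Y p; split=> [[_ Wp] E B i Ci|H]; first exact: Ci.
  (* p is a retract of the W-part of its own factorization *)
  split=> //; have [Z [i [q [Ci [Wq qi]]]]] := W_factor p.
  have [r [ri pr]] := H _ _ i Ci (gid X) q (fun x => esym (qi x)).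
  exact: W_retract ri pr Wq.
Qed.

Lemma wfs_trivcof_fib : wfs (cap_class (llp_class W) W) (all_maps G).
Proof.
split; [|split].
- move=> X Y f; exists X, (gid X), f; split; last by split.
  split; last exact: (W_iso (r := gid X)).
  by move=> E B p _ u v sq; exists u; split=> // b; rewrite sq.
- move=> X Y i; split=> [[Ci Wi] E B p _|H].
  + have [r [ri ir]] := trivial_cofibration_iso Ci Wi; exact: iso_llp ri ir E B p.
  + have [r [ri ir]] := H _ _ i I (gid X) (gid Y) (fun _ => erefl).
    by split; [move=> E B p _; apply: iso_llp ri ir E B p | apply: W_iso ri ir].
- move=> X Y p; split=> // _ E B i [Ci Wi].
  have [r [ri ir]] := trivial_cofibration_iso Ci Wi; exact: iso_llp ri ir X Y p.
Qed.

Theorem closed_model_all_fibrations :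
  closed_model_structure (all_maps G) (llp_class W) W.
Proof. by split; [|split; [exact: wfs_cof_trivfib | exact: wfs_trivcof_fib]]. Qed.

End ModelStructureAllFibrations.

(* Quotient of a G-set by a G-congruence, with its universal property.
   Classes are represented as predicates R a; representatives are chosen
   with the axiom of choice. *)
Section Quotient.
Variables (G : group) (P : gset G) (R : P -> P -> Prop).

Record gcongruence : Prop := GCongruence {
  gc_refl : forall a, R a a;
  gc_sym : forall a b, R a b -> R b a;
  gc_trans : forall a b c, R a b -> R b c -> R a c;
  gc_act : forall g a b, R a b -> R (act g a) (act g b) }.

Hypothesis hR : gcongruence.

Definition qclass := {C : P -> Prop | exists a, C = R a}.

Definition qpi (a : P) : qclass := exist _ (R a) (ex_intro _ a erefl).

Definition qrep (c : qclass) : P :=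
  proj1_sig (constructive_indefinite_description _ (proj2_sig c)).

Lemma qrepK (c : qclass) : qpi (qrep c) = c.
Proof.
case: c => C HC; rewrite /qrep /=.
case: (constructive_indefinite_description _ _) => a /= Ha; subst.
by rewrite /qpi; f_equal; apply: proof_irrelevance.
Qed.

Lemma qpi_eq (a b : P) : qpi a = qpi b <-> R a b.
Proof.
split=> [e|hab].
- by have /= -> := f_equal (@proj1_sig _ _) e; apply: gc_refl.
- have Rab : R a = R b.
    apply: functional_extensionality => x; apply: propositional_extensionality.
    by split=> h; [exact: (gc_trans hR (gc_sym hR hab) h) | exact: (gc_trans hR hab h)].
  rewrite /qpi; move: (ex_intro _ a _) (ex_intro _ b _); rewrite Rab => p1 p2.
  by f_equal; apply: proof_irrelevance.
Qed.

Lemma qpi_rep (a : P) : R (qrep (qpi a)) a.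
Proof. by apply/qpi_eq; rewrite qrepK. Qed.

Definition quotient_gset : gset G.
Proof.
refine (@GSet G qclass (fun g c => qpi (act g (qrep c))) _ _).
- by move=> c; rewrite act1 qrepK.
- move=> g h c; apply/qpi_eq; rewrite actM; apply: (gc_act hR).
  exact: (gc_sym hR (qpi_rep _)).
Defined.

Definition quot_map : gmap P quotient_gset.
Proof.
refine (@GMap G P quotient_gset qpi _).
by move=> g a; apply/qpi_eq; exact: (gc_act hR _ (gc_sym hR (qpi_rep a))).
Defined.

Lemma quot_map_surj (c : quotient_gset) : exists a, quot_map a = c.
Proof. by exists (qrep c); apply: qrepK. Qed.

Lemma quot_map_eq (a b : P) : quot_map a = quot_map b <-> R a b.
Proof. exact: qpi_eq. Qed.

Section Lift.
Variables (E : gset G) (h : gmap P E).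
Hypothesis h_compat : forall a b, R a b -> h a = h b.

Definition quot_lift : gmap quotient_gset E.
Proof.
refine (@GMap G quotient_gset E (fun c => h (qrep c)) _).
move=> g c /=; rewrite -gequiv; apply: h_compat; exact: qpi_rep.
Defined.

Lemma quot_liftE (a : P) : quot_lift (quot_map a) = h a.
Proof. exact: h_compat (qpi_rep a). Qed.

End Lift.
End Quotient.

(* Freely attach to X one orbit cell G x {q} for each pair q = (w, y) with y
   fixed by val w; the cells map to Y by (s, q) |-> s.y.  Then take the least
   G-congruence that makes each cell q fixed by val w (so that fixed points of
   Y lift) and identifies two points lying over the same point of Y once both
   are fixed by a common val w (so that fixed points do not split). *)
Section Factorization.
Variables (G : group) (D : Type) (val : D -> G) (X Y : gset G) (f : gmap X Y).

Definition fixed_pair := {w : D & {y : Y | fixed (val w) y}}.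

Definition cells : gset G := sum_gset X (free_gset G fixed_pair).

Definition cell (q : fixed_pair) : cells := inr (gone G, q).

Definition cells_map : gmap cells Y :=
  gcase f (free_ext (fun q : fixed_pair => sval (projT2 q))).

Inductive merge_rel : cells -> cells -> Prop :=
  | mr_refl a : merge_rel a a
  | mr_sym a b : merge_rel a b -> merge_rel b a
  | mr_trans a b c : merge_rel a b -> merge_rel b c -> merge_rel a c
  | mr_act g a b : merge_rel a b -> merge_rel (act g a) (act g b)
  | mr_cell q : merge_rel (act (val (projT1 q)) (cell q)) (cell q)
  | mr_merge w a1 a2 : cells_map a1 = cells_map a2 ->
      merge_rel (act (val w) a1) a1 -> merge_rel (act (val w) a2) a2 -> merge_rel a1 a2.

Lemma merge_congr : gcongruence merge_rel.
Proof. by split; [exact: mr_refl | exact: mr_sym | exact: mr_trans | exact: mr_act]. Qed.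

Local Notation zq := (quot_map merge_congr).

Lemma cells_map_compat (a b : cells) : merge_rel a b -> cells_map a = cells_map b.
Proof.
elim=> {a b} [a|a b _ ->|a b c _ -> _ ->|g a b _ e|[w [y hy]]|] //.
- by rewrite !gequiv e.
- by rewrite gequiv /= act1 hy.
Qed.

Definition mid_gset : gset G := quotient_gset merge_congr.

Definition mid_in : gmap X mid_gset := gcomp zq (ginl X (free_gset G fixed_pair)).

Definition mid_out : gmap mid_gset Y := quot_lift merge_congr cells_map_compat.

Lemma mid_outE (a : cells) : mid_out (zq a) = cells_map a.
Proof. exact: quot_liftE. Qed.

Lemma mid_factor (x : X) : mid_out (mid_in x) = f x.
Proof. exact: mid_outE. Qed.

Lemma mid_out_fix_bij : fix_bij val mid_out.
Proof.
split.
- move=> w y hy; pose q : fixed_pair := existT _ w (exist _ y hy).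
  exists (zq (cell q)); split; first by rewrite mid_outE /= act1.
  by rewrite /fixed -gequiv; apply/quot_map_eq; apply: (mr_cell q).
- move=> w z1 z2; have [a1 <-] := quot_map_surj z1; have [a2 <-] := quot_map_surj z2.
  rewrite !mid_outE /fixed -!gequiv => e /quot_map_eq r1 /quot_map_eq r2.
  by apply/quot_map_eq; apply: mr_merge e r1 r2.
Qed.

(* mid_in lifts against fix-bijections: X is mapped as prescribed, each cell
   goes to a chosen fixed lift of its image, and the merging relation is
   respected precisely because the target map is injective on fixed points. *)
Lemma mid_in_cofibration : llp_class (fix_bij val) mid_in.
Proof.
move=> E B p [p_surj p_inj] u v sq.
have v_cell_fixed q : fixed (val (projT1 q)) (v (zq (cell q))).
  by rewrite /fixed -!gequiv; congr (v _); apply/quot_map_eq; apply: mr_cell.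
have lift q : {e : E | p e = v (zq (cell q)) /\ fixed (val (projT1 q)) e}.
  by apply: constructive_indefinite_description; apply: p_surj; apply: v_cell_fixed.
pose h := gcase u (free_ext (fun q => sval (lift q))).
have p_h a : p (h a) = v (zq a).
  suff: forall a, gcomp p h a = gcomp v zq a by apply.
  apply: gmap_sum_free_ext => [x|q] /=; first exact: sq.
  by rewrite act1; case: (lift q) => e [].
have h_compat a b : merge_rel a b -> h a = h b.
  elim=> {a b} [a|a b _ ->|a b c _ -> _ ->|g a b _ e|q|w a1 a2 e r1 e1 r2 e2] //.
  - by rewrite !gequiv e.
  - by rewrite gequiv /h /= act1; case: (lift q) => e [].
  - apply: (p_inj w); rewrite /fixed -?gequiv //.
    by rewrite !p_h; congr (v _); apply/quot_map_eq; apply: mr_merge e r1 r2.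
exists (quot_lift merge_congr h_compat); split=> [x|c]; first exact: quot_liftE.
by have [a <-] := quot_map_surj c; rewrite quot_liftE p_h.
Qed.

End Factorization.

Lemma fix_bij_factor (G : group) (D : Type) (val : D -> G) (X Y : gset G) (f : gmap X Y) :
  exists (Z : gset G) (i : gmap X Z) (p : gmap Z Y),
    llp_class (fix_bij val) i /\ fix_bij val p /\ (forall x, p (i x) = f x).
Proof.
exists (mid_gset val f), (mid_in val f), (mid_out val f).
by split; [exact: mid_in_cofibration | split; [exact: mid_out_fix_bij | exact: mid_factor]].
Qed.

Lemma ghom_ext (Γ Δ : graph) (h1 h2 : ghom Γ Δ) :
  (forall x, hnode h1 x = hnode h2 x) -> (forall e, harc h1 e = harc h2 e) -> h1 = h2.
Proof.
case: h1 => n1 a1 s1 t1; case: h2 => n2 a2 s2 t2 /= Hn Ha.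
have En := functional_extensionality _ _ Hn.
have Ea := functional_extensionality _ _ Ha.
by subst; f_equal; apply: proof_irrelevance.
Qed.

(* Closed walks in a Cayley graph.  A morphism c_{n+1} -> C(X, A, G) is the
   same thing as a sequence of n+1 generator labels together with a base point
   x fixed by the product of the labels. *)
Section ClosedWalks.
Variables (G : group) (A : G -> Prop).

Definition gens := {a : G | A a}.

(* label_prod lab k = lab(k-1) * ... * lab(0), the product of the first k labels *)
Fixpoint label_prod n (lab : 'I_n.+1 -> gens) (k : nat) : G :=
  match k with
  | 0 => gone G
  | k'.+1 => gmul (sval (lab (inord k'))) (label_prod lab k')
  end.

Definition word := {n : nat & 'I_n.+1 -> gens}.

Definition word_val (w : word) : G := label_prod (projT2 w) (projT1 w).+1.

Variables (X : gset G) (n : nat).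

Definition closed_walk (lab : 'I_n.+1 -> gens) (x : X)
  (hx : fixed (label_prod lab n.+1) x) : ghom (cycle_graph n.+1) (cayley A X).
Proof.
refine (@GHom (cycle_graph n.+1) (cayley A X) (fun k => act (label_prod lab k) x)
   (fun k => (act (label_prod lab k) x, lab k)) _ _).
- by [].
- move=> k /=; have [kn|kn] := ltnP k n.
  + by rewrite modn_small //= inord_val actM.
  + have ek : nat_of_ord k = n by apply/eqP; rewrite eqn_leq kn -ltnS ltn_ord.
    have lastk : (inord n : 'I_n.+1) = k by apply: val_inj; rewrite /= inordK // ek.
    by rewrite ek modnn /= act1 -[RHS]hx /= actM lastk.
Defined.

Definition arc_labels (h : ghom (cycle_graph n.+1) (cayley A X)) : 'I_n.+1 -> gens :=
  fun i => (harc h i).2.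

Lemma walk_node (h : ghom (cycle_graph n.+1) (cayley A X)) (k : 'I_n.+1) :
  hnode h k = act (label_prod (arc_labels h) k) (hnode h ord0).
Proof.
suff walk m : m <= n -> hnode h (inord m) = act (label_prod (arc_labels h) m) (hnode h ord0).
  by rewrite -walk ?inord_val // -ltnS.
elim: m => [|m IH] hm.
  by rewrite /= act1; congr (hnode h _); apply: val_inj; rewrite /= inordK.
have next : inord m.+1 = ordS (inord m : 'I_n.+1).
  by apply: val_inj; rewrite /= !inordK ?modn_small // (leq_trans hm).
rewrite next -(htgt h) /=; have /= -> := hsrc h (inord m).
by rewrite IH ?actM //; apply: ltnW.
Qed.

(* the walk closes up, so its base point is fixed by the product of all labels *)
Lemma walk_base_fixed (h : ghom (cycle_graph n.+1) (cayley A X)) :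
  fixed (label_prod (arc_labels h) n.+1) (hnode h ord0).
Proof.
have wrap : (ord0 : 'I_n.+1) = ordS (inord n : 'I_n.+1).
  by apply: val_inj; rewrite /= inordK // modnn.
rewrite /fixed [in RHS]wrap -(htgt h) /=; have /= -> := hsrc h (inord n).
by rewrite (walk_node h (inord n)) inordK // actM.
Qed.

Lemma closed_walk_eta (h : ghom (cycle_graph n.+1) (cayley A X)) :
  h = closed_walk (walk_base_fixed h).
Proof.
apply: ghom_ext => [k|k] /=; first exact: walk_node.
rewrite -(walk_node h k); have /= <- := hsrc h k.
by rewrite /arc_labels; case: (harc h k).
Qed.

Lemma closed_walk_base (lab : 'I_n.+1 -> gens) (x x' : X) hx hx' :
  x = x' -> @closed_walk lab x hx = @closed_walk lab x' hx'.
Proof. by move=> e; subst; rewrite (proof_irrelevance _ hx hx'). Qed.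

End ClosedWalks.

Lemma cayley_map_closed_walk (G : group) (A : G -> Prop) (X Y : gset G) (f : gmap X Y)
    n (lab : 'I_n.+1 -> gens A) (x : X) (hx : fixed (label_prod lab n.+1) x)
    (hy : fixed (label_prod lab n.+1) (f x)) :
  ghcomp (cayley_map A f) (closed_walk hx) = closed_walk hy.
Proof. by apply: ghom_ext => k /=; rewrite gequiv. Qed.

Section CountingWeakEquivalences.
Variables (G : group) (A : G -> Prop) (X Y : gset G) (f : gmap X Y).

Lemma counting_we_fix_bij :
  gph_counting_we (cayley_map A f) -> fix_bij (@word_val G A) f.
Proof.
move=> bij; split.
- case=> n lab y /= hy; have [g _ gK] := bij n.+1 isT.
  set h := g (closed_walk hy).
  have fh : ghcomp (cayley_map A f) h = closed_walk hy by rewrite /h gK.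
  exists (hnode h ord0); split.
    have -> : f (hnode h ord0) = hnode (ghcomp (cayley_map A f) h) ord0 by [].
    by rewrite fh /= act1.
  have labels : arc_labels h = lab.
    apply: functional_extensionality => i.
    have -> : arc_labels h i = (harc (ghcomp (cayley_map A f) h) i).2 by [].
    by rewrite fh.
  by have := walk_base_fixed h; rewrite labels.
- case=> n lab x1 x2 /= e h1 h2.
  have walks_eq : closed_walk h1 = closed_walk h2.
    apply: (bij_inj (bij n.+1 isT)) => /=.
    rewrite (cayley_map_closed_walk h1 (fixed_gmap f h1)).
    by rewrite (cayley_map_closed_walk h2 (fixed_gmap f h2)); apply: closed_walk_base.
  have := f_equal (fun h : ghom (cycle_graph n.+1) (cayley A X) => hnode h ord0) walks_eq.
  by rewrite /= !act1.
Qed.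

Lemma fix_bij_counting_we :
  fix_bij (@word_val G A) f -> gph_counting_we (cayley_map A f).
Proof.
move=> [f_surj f_inj] [//|n] _.
have lift_base (hY : ghom (cycle_graph n.+1) (cayley A Y)) :
    {x : X | f x = hnode hY ord0 /\ fixed (label_prod (arc_labels hY) n.+1) x}.
  apply: constructive_indefinite_description.
  exact: (f_surj (existT _ n (arc_labels hY)) _ (walk_base_fixed hY)).
exists (fun hY => closed_walk (proj2 (proj2_sig (lift_base hY)))).
- move=> h; rewrite [RHS]closed_walk_eta; apply: closed_walk_base.
  case: (lift_base _) => x [fx hx] /=.
  by apply: (f_inj (existT _ n (arc_labels h))) => //=; apply: walk_base_fixed.
- move=> hY; case: (lift_base hY) => x [fx hx] /=.
  by rewrite (cayley_map_closed_walk _ (fixed_gmap f hx)) [RHS]closed_walk_eta;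
    apply: closed_walk_base.
Qed.

End CountingWeakEquivalences.

Theorem corollary6p5 (G : group) (A : G -> Prop) (hA : generates A) :
  exists Fib Cof W : mclass G,
    closed_model_structure Fib Cof W /\
    (forall (X Y : gset G) (f : gmap X Y), Fib X Y f) /\
    (forall (X Y : gset G) (f : gmap X Y),
       W X Y f <-> gph_counting_we (cayley_map A f)).
Proof.
pose W := fix_bij (@word_val G A).
exists (all_maps G), (llp_class W), W; split; last split.
- apply: closed_model_all_fibrations.
  + exact: fix_bij_2of3.
  + exact: fix_bij_iso.
  + exact: fix_bij_retract.
  + exact: fix_bij_factor.
- by [].
- by move=> X Y f; split; [apply: fix_bij_counting_we | apply: counting_we_fix_bij].
Qed.
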